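(* Let $f:\mathbb{R}^n\to\mathbb{R}$ be convex and differentiable with $\nabla f$ $L$-Lipschitz continuous. Let $w^t\in\Delta^n$ and let $$w^{t+1}=w^t-\eta_t\,w^t\odot\Pi^t\nabla f^t$$ with $0<\eta_t\le\min\{1/L,\eta_{t,\max}\}$. Then $$f(w^{t+1})\le f(w^t)-\frac{\eta_t}{2}\operatorname{Var}[\nabla f^t\,|\,w^t].$$
   Context: $\Delta^n=\{w\in\mathbb{R}^n : \sum_i w_i=1,\ w_i\ge 0\}$. Write $\nabla f^t=\nabla f(w^t)$ and $(\Pi^t\nabla f^t)_i=\nabla_i f(w^t)-w^t\cdot\nabla f(w^t)$; $\odot$ is componentwise multiplication. $\eta_{t,\max}=1/\max_i(\nabla_i f(w^t)-w^t\cdot\nabla f(w^t))$, and $\operatorname{Var}[\nabla f^t\,|\,w^t]=\sum_i w^t_i\big(\nabla_i f(w^t)-w^t\cdot\nabla f(w^t)\big)^2$. *)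

From HB Require Import structures.
From mathcomp Require Import all_boot all_order all_algebra.
From mathcomp Require Import all_classical all_reals all_analysis.
Set Implicit Arguments. Unset Strict Implicit. Unset Printing Implicit Defensive.
Import Order.TTheory GRing.Theory Num.Theory.
Import numFieldNormedType.Exports.
Local Open Scope ring_scope.

Definition simplex (R : realType) (n : nat) (w : 'rV[R]_n) : Prop :=
  (\sum_i w 0 i = 1) /\ (forall i, 0 <= w 0 i).

Definition dotv (R : realType) (n : nat) (u v : 'rV[R]_n) : R :=
  \sum_i u 0 i * v 0 i.
Definition enorm (R : realType) (n : nat) (v : 'rV[R]_n) : R :=
  Num.sqrt (dotv v v).

Definition grad (R : realType) (n : nat) (f : 'rV[R]_n -> R) (x : 'rV[R]_n)
  : 'rV[R]_n := \row_i ('d f x (delta_mx 0 i : 'rV[R]_n)).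

Definition convex_fun (R : realType) (n : nat) (f : 'rV[R]_n -> R) : Prop :=
  forall (x y : 'rV[R]_n) (t : R), 0 <= t -> t <= 1 ->
    f (t *: x + (1 - t) *: y) <= t * f x + (1 - t) * f y.

Definition proj_grad (R : realType) (n : nat) (f : 'rV[R]_n -> R)
  (w : 'rV[R]_n) : 'rV[R]_n :=
  \row_i (grad f w 0 i - dotv w (grad f w)).

Definition var_grad (R : realType) (n : nat) (f : 'rV[R]_n -> R)
  (w : 'rV[R]_n) : R :=
  \sum_i w 0 i * (proj_grad f w 0 i) ^+ 2.

Definition md_step (R : realType) (n : nat) (f : 'rV[R]_n -> R)
  (eta : R) (w : 'rV[R]_n) : 'rV[R]_n :=
  \row_i (w 0 i - eta * (w 0 i * proj_grad f w 0 i)).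

From HB Require Import structures.
From mathcomp Require Import all_boot all_order all_algebra.
From mathcomp Require Import all_classical all_reals all_analysis.
From mathcomp Require Import ring lra.
Set Implicit Arguments. Unset Strict Implicit. Unset Printing Implicit Defensive.
Import Order.TTheory GRing.Theory Num.Theory.
Import numFieldNormedType.Exports.
Local Open Scope ring_scope.
Local Open Scope classical_set_scope.

(* The step is w^{t+1} = w - eta d with d_i = w_i (g_i - w.g).  Since w is a
   probability vector, g.d is exactly the variance V, and, as w_i^2 <= w_i,
   |d|^2 <= V.  The descent lemma for an L-smooth f then gives
   f(w - eta d) <= f(w) - eta V + L eta^2 V / 2 <= f(w) - eta V / 2. *)

Section InnerProduct.
Variables (R : realType) (n : nat).
Implicit Types (u v w : 'rV[R]_n) (c : R).

Lemma dotvBl u v w : dotv (u - v) w = dotv u w - dotv v w.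
Proof. by rewrite /dotv -sumrB; apply: eq_bigr => i _; rewrite !mxE mulrBl. Qed.

Lemma dotvZr u v c : dotv u (c *: v) = c * dotv u v.
Proof. by rewrite /dotv mulr_sumr; apply: eq_bigr => i _; rewrite mxE mulrCA. Qed.

Lemma dotvZZ v c : dotv (c *: v) (c *: v) = c ^+ 2 * dotv v v.
Proof. by rewrite /dotv mulr_sumr; apply: eq_bigr => i _; rewrite !mxE; ring. Qed.

Lemma dotvv_ge0 v : 0 <= dotv v v.
Proof. by apply: sumr_ge0 => i _; rewrite -expr2 sqr_ge0. Qed.

Lemma enormZ v c : 0 <= c -> enorm (c *: v) = c * enorm v.
Proof.
by move=> c_ge0; rewrite /enorm dotvZZ sqrtrM ?sqr_ge0 // sqrtr_sqr ger0_norm.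
Qed.

Lemma dotv_le_of_enorm_le u v c :
  0 < c -> enorm u <= c * enorm v -> dotv u v <= c * dotv v v.
Proof.
move=> c_gt0 uv.
have uu_le : dotv u u <= c ^+ 2 * dotv v v.
  have := sqr_sqrtr (dotvv_ge0 u); have := sqr_sqrtr (dotvv_ge0 v).
  have := sqrtr_ge0 (dotv u u); have := sqrtr_ge0 (dotv v v).
  move: uv; rewrite /enorm; nra.
(* AM-GM: [2 c u_i v_i <= u_i^2 + c^2 v_i^2] *)
have amgm : 2 * c * dotv u v <= dotv u u + c ^+ 2 * dotv v v.
  rewrite /dotv !mulr_sumr -big_split /=; apply: ler_sum => i _.
  by have := sqr_ge0 (u 0 i - c * v 0 i); nra.
nra.
Qed.

End InnerProduct.

Section Smoothness.
Variables (R : realType) (n : nat) (f : 'rV[R]_n -> R).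
Hypothesis df : forall x, differentiable f x.

Lemma diff_dotv_grad x d : 'd f x d = dotv (grad f x) d.
Proof.
rewrite {1}(row_sum_delta d) linear_sum /dotv; apply: eq_bigr => i _.
by rewrite linearZ /= mxE mulrC.
Qed.

Lemma is_derive_line (x d : 'rV[R]_n) (t : R) :
  is_derive t 1 (fun s : R => f (s *: d + x)) (dotv (grad f (t *: d + x)) d).
Proof.
have dline : differentiable (fun s : R => s *: d + x) t.
  by apply: differentiableD => //; exact: differentiable_cst.
have dfline : differentiable (f \o (fun s : R => s *: d + x)) t.
  exact: differentiable_comp.
have := derivableP (@diff_derivable _ _ _ _ _ (1 : R) dfline).
rewrite deriveE // diff_comp //= -diff_dotv_grad.
suff -> : 'd (fun s : R => s *: d + x) t 1 = d by [].
rewrite diffD //; cbv beta; rewrite -[d in RHS]addr0; congr (_ + _).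
  by rewrite (@diff_val _ _ _ _ _ _ _ (is_diff_scalel t d)) scale1r.
by rewrite diff_cst.
Qed.

Variable L : R.
Hypothesis L_gt0 : 0 < L.
Hypothesis grad_lipschitz :
  forall x y, enorm (grad f x - grad f y) <= L * enorm (x - y).

Lemma dotv_grad_increment_le (x d : 'rV[R]_n) (c : R) : 0 < c ->
  dotv (grad f (c *: d + x) - grad f x) d <= L * c * dotv d d.
Proof.
move=> c_gt0; apply: dotv_le_of_enorm_le; first exact: mulr_gt0.
rewrite -mulrA -enormZ ?(ltW c_gt0) // -[c *: d in X in _ <= X](addrK x).
exact: grad_lipschitz.
Qed.

Lemma descent_lemma (x d : 'rV[R]_n) :
  f (x + d) <= f x + dotv (grad f x) d + L / 2 * dotv d d.
Proof.
set c0 := dotv (grad f x) d; set K := L / 2 * dotv d d.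
(* phi s = f (x + s d) minus its quadratic model; the mean value theorem and
   the Lipschitz bound on the gradient give phi 1 <= phi 0. *)
pose phi : R -> R :=
  (fun s => f (s *: d + x)) - c0 \*: (@id R) - K \*: (@id R) ^+ 2.
have phi'E (s : R) : is_derive s 1 phi
    (dotv (grad f (s *: d + x)) d - c0 *: 1 - K *: ((2%:R * s ^+ 1) *: 1)).
  by apply: is_deriveB; first apply: is_deriveB; first exact: is_derive_line.
have phi_cont : {within `[0, 1], continuous phi}.
  apply: continuous_subspaceT => s.
  have [phi_derivable _] := phi'E s.
  exact/differentiable_continuous/derivable1_diffP.
have phiE (s : R) : phi s = f (s *: d + x) - c0 * s - K * s ^+ 2 by [].
suff : phi 1 - phi 0 <= 0.
  rewrite !phiE scale1r scale0r add0r [d + x]addrC expr1n expr0n /=.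
  by rewrite !mulr0 !mulr1 !subr0; lra.
have [c /andP[c_gt0 _] ->] := MVT ltr01 (fun s _ => phi'E s) phi_cont.
move: c_gt0; rewrite bnd_simp => c_gt0.
have := dotv_grad_increment_le x d c_gt0.
rewrite dotvBl subr0 mulr1 expr1 !scaler1 /c0.
have -> : K *: (2 * c) = L * c * dotv d d.
  by rewrite -[K *: _]/(K * (2 * c)) /K; move: (dotv d d) => D; field.
by rewrite subr_le0.
Qed.

End Smoothness.

Definition md_dir (R : realType) (n : nat) (f : 'rV[R]_n -> R) (w : 'rV[R]_n)
  : 'rV[R]_n := \row_i (w 0 i * proj_grad f w 0 i).

Lemma md_stepE (R : realType) (n : nat) (f : 'rV[R]_n -> R) (eta : R)
  (w : 'rV[R]_n) :
  md_step f eta w = w + (- eta) *: md_dir f w.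
Proof. by apply/rowP => i; rewrite !mxE mulNr. Qed.

Section Simplex.
Variables (R : realType) (n : nat) (f : 'rV[R]_n -> R) (w : 'rV[R]_n).
Hypothesis w_simplex : simplex w.

Lemma simplex_le1 i : w 0 i <= 1.
Proof.
case: w_simplex => <- w_ge0.
by rewrite (bigD1 i) //= lerDl sumr_ge0.
Qed.

Lemma sum_weighted_proj_grad : \sum_i w 0 i * proj_grad f w 0 i = 0.
Proof.
case: w_simplex => w_sum1 _.
under eq_bigr => i _ do rewrite mxE mulrBr.
by rewrite sumrB -mulr_suml w_sum1 mul1r subrr.
Qed.

Lemma var_grad_ge0 : 0 <= var_grad f w.
Proof.
by case: w_simplex => _ w_ge0; apply: sumr_ge0 => i _; rewrite mulr_ge0 ?sqr_ge0.
Qed.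

(* g_i = (Pi g)_i + w.g, and the w-weighted sum of Pi g kills the constant w.g. *)
Lemma dotv_grad_md_dir : dotv (grad f w) (md_dir f w) = var_grad f w.
Proof.
rewrite -[RHS]addr0 -(mulr0 (dotv w (grad f w))) -sum_weighted_proj_grad.
rewrite {1}/dotv /var_grad mulr_sumr -big_split /=; apply: eq_bigr => i _.
by rewrite [md_dir _ _ _ _]mxE [proj_grad f w 0 i]mxE; ring.
Qed.

Lemma dotv_md_dir_le_var : dotv (md_dir f w) (md_dir f w) <= var_grad f w.
Proof.
case: w_simplex => _ w_ge0.
rewrite /dotv /var_grad; apply: ler_sum => i _; rewrite [md_dir _ _ _ _]mxE.
have := simplex_le1 i; have := w_ge0 i.
move: (w 0 i) (proj_grad f w 0 i) => a b a_ge0 a_le1.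
have : 0 <= a * (1 - a) * b ^+ 2 by rewrite mulr_ge0 ?sqr_ge0 // mulr_ge0 // subr_ge0.
nra.
Qed.

End Simplex.

Theorem theoremA2 (R : realType) (n : nat) (f : 'rV[R]_n -> R) (L eta : R)
  (w : 'rV[R]_n) :
  convex_fun f ->
  (forall x, differentiable f x) ->
  0 < L ->
  (forall x y, enorm (grad f x - grad f y) <= L * enorm (x - y)) ->
  simplex w ->
  0 < eta ->
  eta <= L^-1 ->
  (forall i, eta * proj_grad f w 0 i <= 1) ->
  f (md_step f eta w) <= f w - eta / 2 * var_grad f w.
Proof.
move=> _ df L_gt0 grad_lipschitz w_simplex eta_gt0 eta_le _.
rewrite md_stepE.
apply: le_trans (descent_lemma df L_gt0 grad_lipschitz _ _) _.
rewrite dotvZr dotvZZ dotv_grad_md_dir // sqrrN.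
have L_eta_le1 : L * eta <= 1 by rewrite -(mulfV (lt0r_neq0 L_gt0)) ler_pM2l.
have := dotv_md_dir_le_var f w_simplex; have := var_grad_ge0 f w_simplex.
have := dotvv_ge0 (md_dir f w).
move: (var_grad f w) (dotv (md_dir f w) (md_dir f w)) => V D D_ge0 V_ge0 D_le_V.
have : 0 <= (1 - L * eta) * (eta * D) by rewrite mulr_ge0 ?subr_ge0 // mulr_ge0 // ltW.
have : 0 <= eta * (V - D) by rewrite mulr_ge0 ?subr_ge0 // ltW.
nra.
Qed.
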